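(* Let $n\ge1$ and $n'=\lfloor n/2\rfloor$. The ring $R_n$ is generated as an $R'_n$-module by the set $\{h_{i_1}\cdots h_{i_{n'}}\mid i_1,\dots,i_{n'}\in\mathbb Z_{\ge0}\}$.
   Context: $R_n=\mathbb C[x_1,\dots,x_n]^{S_n}$; $e_k$ and $h_k$ denote the elementary and complete homogeneous symmetric polynomials in $x_1,\dots,x_n$ ($h_0=1$). $R'_n=\mathbb C[e_{2j+1}\mid 0\le j\le (n-1)/2]\subset R_n$. *)

From mathcomp Require Import all_boot all_order all_algebra.
From mathcomp Require Import mpoly.
From mathcomp Require Import reals.
From mathcomp Require Import complex.

Set Implicit Arguments.
Unset Strict Implicit.
Unset Printing Implicit Defensive.

Import Order.TTheory GRing.Theory Num.Theory.
Local Open Scope ring_scope.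

Notation CC R := (complex R).

Definition hsym (K : comNzRingType) (n k : nat) : {mpoly K[n]} :=
  \sum_(m : 'X_{1..n < k.+1} | mdeg m == k) 'X_[m].

Definition esym (K : comNzRingType) (n k : nat) : {mpoly K[n]} := mesym n K k.

(* The generators e_{2j+1}, 0 <= j <= (n-1)/2, i.e. j < uphalf n. *)
Definition odd_esyms (K : comNzRingType) (n : nat) : (uphalf n).-tuple {mpoly K[n]} :=
  [tuple esym K n (2 * j + 1) | j < uphalf n].

(* Membership in R'_n = K[e_{2j+1} | 0 <= j <= (n-1)/2]: p is a polynomial
   expression in the odd elementary symmetric polynomials. *)
Definition in_Rprime (K : comNzRingType) (n : nat) (p : {mpoly K[n]}) : Prop :=
  exists q : {mpoly K[uphalf n]}, p = q \mPo odd_esyms K n.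

(* By the fundamental theorem R_n is generated by the e_k as a ring, and the
   Newton identities sum_i (-1)^i e_i h_(k-i) = 0 express each e_k through
   lower e_i and the h_j; so it suffices that the R'_n-module M spanned by the
   products of n' = n/2 complete symmetric polynomials contains every product
   of h's.  Splitting the Newton identity by parity gives
   sum_p e_(2p) h_(k-2p) = sum_q e_(2q+1) h_(k-2q-1), where only e_0, e_2, ...,
   e_(2n') occur on the left.  For a block of n'+1 positive indices
   a_0 >= ... >= a_n', the matrix A_ij = h_(a_i + 2(j-i)) has the block as its
   diagonal product.  Expanding det A along its last column, after adding to it
   the other columns weighted by e_(2(n'-j)), the parity identity exhibits
   det A as an R'_n-combination of products of lower total degree; every other
   term of the Leibniz expansion is a product of the same degree and length
   with a larger weight sum_i (n'+2)^(a_i).  Induction on degree, length and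
   weight concludes. *)

From mathcomp Require Import all_boot all_order all_algebra.
From mathcomp Require Import mpoly.
From mathcomp Require Import reals.
From mathcomp Require Import complex.
From mathcomp Require Import fingroup perm zify.

Set Implicit Arguments.
Unset Strict Implicit.
Unset Printing Implicit Defensive.

Import Order.TTheory GRing.Theory Num.Theory.
Local Open Scope ring_scope.

Lemma sum_subset_sign (R : comPzRingType) (T : finType) (A : {set T}) :
  A != set0 -> \sum_(S : {set T} | S \subset A) (-1) ^+ #|S| = 0 :> R.
Proof.
case/set0Pn=> a Aa.
pose f (i : T) : R := if i \in A then -1 else 0.
have := @bigA_distr R 0 1 *%R +%R T f (fun _ => 1).
rewrite (bigD1 a) //= {1}/f Aa addNr mul0r (bigID (fun S : {set T} => S \subset A)) /=.
rewrite [X in _ = _ + X]big1 => [|S /subsetPn[i iS iA]]; last first.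
  by rewrite (bigD1 i) //= iS {1}/f (negbTE iA) mul0r.
rewrite addr0 => E; rewrite [RHS]E; apply: eq_bigr => S sSA.
rewrite -prodr_const big_mkcond; apply: eq_bigr => i _.
by case: ifP => // iS; rewrite /f (subsetP sSA).
Qed.

Lemma sum_by_card (R : nmodType) (T : finType) k (F : {set T} -> R) :
  \sum_(i < k) \sum_(S : {set T} | #|S| == i) F S = \sum_(S : {set T} | (#|S| < k)%N) F S.
Proof.
under eq_bigr do rewrite big_mkcond.
rewrite exchange_big /= [RHS]big_mkcond; apply: eq_bigr => S _.
case: ltnP => [lt|ge].
  rewrite (bigD1 (Ordinal lt)) //= eqxx big1 ?addr0 // => i.
  by rewrite -val_eqE /= eq_sym => /negbTE ->.
by rewrite big1 // => i _; rewrite (gtn_eqF (leq_trans (ltn_ord i) ge)).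
Qed.

Lemma mcoeffXM (R : comNzRingType) n (p : {mpoly R[n]}) a mu :
  ('X_[a] * p)@_mu = if (a <= mu)%MM then p@_(mu - a) else 0.
Proof.
case: ifP => le; first by rewrite -{1}(submK le) addmC mulrC mcoeffMX.
rewrite {1}[p]mpolyE mulr_sumr raddf_sum /= big1 // => m _.
rewrite -scalerAr -mpolyXD mcoeffZ mcoeffX; case: eqP => [E|]; last by rewrite mulr0.
by move: le; rewrite -E lem_addr.
Qed.

Definition mnmsupp n (mu : 'X_{1..n}) : {set 'I_n} := [set i | (0 < mu i)%N].

Lemma card_mnmsupp n (mu : 'X_{1..n}) : (#|mnmsupp mu| <= mdeg mu)%N.
Proof.
rewrite mdegE -sum1_card (bigID (mem (mnmsupp mu)) _ (fun i => mu i)) /=.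
by apply: leq_trans (leq_addr _ _); apply: leq_sum => i; rewrite inE.
Qed.

Lemma mesym1_le n (S : {set 'I_n}) (mu : 'X_{1..n}) :
  (mesym1 S <= mu)%MM = (S \subset mnmsupp mu).
Proof.
apply/mnm_lepP/subsetP => [le i iS|sS i]; first by have := le i; rewrite mnmE iS inE.
by rewrite mnmE; case: (boolP (i \in S)) => // /sS; rewrite inE.
Qed.

Section Newton.
Variables (K : comNzRingType) (n : nat).
Local Notation h := (hsym K n).
Local Notation e := (mesym n K).

Lemma mcoeff_hsym k mu : (h k)@_mu = (mdeg mu == k)%:R.
Proof.
rewrite /hsym raddf_sum /=; have [dmu|dmu] := eqVneq (mdeg mu) k.
  have ltk : (mdeg mu < k.+1)%N by rewrite dmu.
  rewrite (bigD1 (BMultinom ltk)) ?dmu //= mcoeffX eqxx big1 ?addr0 // => b /andP[_ nb].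
  by rewrite mcoeffX; case: eqP => // bE; case/eqP: nb; apply/val_inj; rewrite /= bE.
by rewrite big1 // => b /eqP bk; rewrite mcoeffX; case: eqP => // bE; rewrite -bE bk eqxx in dmu.
Qed.

Lemma hsym0 : h 0 = 1.
Proof. by apply/mpolyP => mu; rewrite mcoeff_hsym mcoeff1 mdeg_eq0. Qed.

Lemma mcoeff_mesymM_hsym i k mu : (i <= k)%N ->
  (e i * h (k - i))@_mu =
    (mdeg mu == k)%:R * \sum_(S : {set 'I_n} | #|S| == i) (S \subset mnmsupp mu)%:R.
Proof.
move=> ik; rewrite mesymE mulr_suml raddf_sum mulr_sumr /=.
apply: eq_bigr => S /eqP cS; rewrite mcoeffXM mcoeff_hsym mesym1_le.
case: (boolP (S \subset _)) => [sS|_]; last by rewrite mulr0.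
rewrite -mesym1_le in sS.
by rewrite -{2}(submK sS) mdegD mdeg_mesym1 cS -(eqn_add2r i) subnK // mulr1.
Qed.

Lemma newton_esym_hsym k : (0 < k)%N ->
  \sum_(i < k.+1) (-1) ^+ i *: (e i * h (k - i)) = 0.
Proof.
move=> k_gt0; apply/mpolyP => mu; rewrite mcoeff0 raddf_sum /=.
under eq_bigr => i _ do rewrite mcoeffZ mcoeff_mesymM_hsym -1?ltnS // mulrCA.
rewrite -mulr_sumr; have [dmu|_] := eqVneq (mdeg mu) k; last by rewrite mul0r.
rewrite mul1r; set T := mnmsupp mu.
have T_neq0 : T != set0.
  apply: contraTneq k_gt0 => T0; rewrite -dmu mdegE lt0n negbK sum_nat_eq0.
  by apply/forallP => i; apply/implyP => _; move: (in_set0 i); rewrite -T0 inE lt0n => /negbFE.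
apply: etrans (sum_subset_sign K T_neq0).
transitivity (\sum_(i < k.+1) \sum_(S : {set 'I_n} | #|S| == i)
                (-1) ^+ #|S| * (S \subset T)%:R :> K).
  by apply: eq_bigr => i _; rewrite mulr_sumr; apply: eq_bigr => S /eqP ->.
rewrite sum_by_card [LHS](bigID (fun S : {set 'I_n} => S \subset T)) /=.
rewrite [X in _ + X]big1 ?addr0 => [|S /andP[_ /negbTE ->]]; last by rewrite mulr0.
apply: eq_big => [S|S /andP[_ ->]]; last by rewrite mulr1.
rewrite andbC; case: (boolP (S \subset T)) => //= sST.
by rewrite ltnS -dmu (leq_trans (subset_leq_card sST)) // card_mnmsupp.
Qed.

End Newton.

Lemma sum_ord_trunc (V : nmodType) (F : nat -> V) a N :
  (a <= N)%N -> (forall i, (a <= i)%N -> F i = 0) ->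
  \sum_(i < N) F i = \sum_(i < a) F i.
Proof.
move=> aN Fa; rewrite (big_ord_widen N F aN) [RHS]big_mkcond /=.
by apply: eq_bigr => i _; case: ltnP => // /Fa ->.
Qed.

Lemma sum_ord_parity (V : nmodType) (F : nat -> V) N :
  \sum_(i < N + N) F i = \sum_(p < N) F (2 * p)%N + \sum_(p < N) F (2 * p).+1.
Proof.
elim: N => [|N IH]; first by rewrite !big_ord0 addr0.
rewrite addnS addSn !big_ord_recr /= IH mul2n -addnn.
by rewrite -!addrA; congr (_ + _); rewrite addrCA.
Qed.

Section Parity.
Variables (K : comNzRingType) (n : nat).
Local Notation h := (hsym K n).
Local Notation e := (mesym n K).

Definition hsymz (z : int) : {mpoly K[n]} := if z is Posz k then h k else 0.

Lemma hsymz_lt0 z : z < 0 -> hsymz z = 0.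
Proof. by case: z. Qed.

Lemma esym_hsym_parity k : (0 < k)%N ->
  \sum_(p < (n./2).+1) e (2 * p) * hsymz (k%:Z - (2 * p)%:Z) =
  \sum_(q < uphalf n) e (2 * q).+1 * hsymz (k%:Z - ((2 * q).+1)%:Z).
Proof.
move=> k_gt0; pose t i := (-1) ^+ i *: (e i * hsymz (k%:Z - i%:Z)).
pose N := (k + n).+1.
have t_gt_k i : (k.+1 <= i)%N -> t i = 0.
  by move=> ki; rewrite /t hsymz_lt0 ?mulr0 ?scaler0 // subr_lt0 ltz_nat.
have t_gt_n i : (n.+1 <= i)%N -> t i = 0.
  by move=> ni; rewrite /t mesym_geqnE ?mul0r ?scaler0.
have : \sum_(i < N + N) t i = 0.
  rewrite (sum_ord_trunc (F := t) (a := k.+1)) ?leq_addr //; last by rewrite /N; lia.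
  apply: etrans (newton_esym_hsym K n k_gt0); apply: eq_bigr => i _.
  by rewrite /t subzn // -ltnS.
rewrite sum_ord_parity => /eqP; rewrite addr_eq0 => /eqP sum_even.
have n_half := odd_double_half n; have n_uphalf := odd_double_half n.+1.
rewrite uphalfE; have -> : \sum_(p < (n./2).+1) e (2 * p) * hsymz (k%:Z - (2 * p)%:Z) =
    \sum_(p < N) t (2 * p)%N.
  rewrite (sum_ord_trunc (F := fun p => t (2 * p)%N) (a := (n./2).+1)) /N; first last.
  - by move=> p np; apply: t_gt_n; lia.
  - by lia.
  by apply: eq_bigr => p _; rewrite /t exprM sqrrN !expr1n scale1r.
rewrite sum_even (sum_ord_trunc (F := fun p => t (2 * p).+1) (a := n.+1./2)) /N; first last.
- by move=> p np; apply: t_gt_n; lia.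
- by lia.
rewrite -sumrN; apply: eq_bigr => q _.
by rewrite /t exprS exprM sqrrN !expr1n mulr1 scaleN1r opprK.
Qed.

End Parity.

Section HsymModule.
Variables (K : comNzRingType) (n : nat).
Local Notation P := {mpoly K[n]}.
Local Notation h := (hsym K n).
Local Notation e := (mesym n K).
Local Notation in_Rprime := (@in_Rprime K n).

Lemma in_RprimeM a b : in_Rprime a -> in_Rprime b -> in_Rprime (a * b).
Proof. by move=> [p ->] [q ->]; exists (p * q); rewrite rmorphM. Qed.

Lemma in_RprimeC c : in_Rprime c%:MP.
Proof. by exists c%:MP; rewrite comp_mpolyC. Qed.

Lemma in_Rprime_mesym_odd q : (q < uphalf n)%N -> in_Rprime (e (2 * q).+1).
Proof.
move=> lt_q; exists 'X_(Ordinal lt_q).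
by rewrite comp_mpolyXU -tnth_nth tnth_mktuple /esym addn1.
Qed.

Definition hprod (a : seq nat) : P := \prod_(x <- a) h x.

Lemma hprod_cat a b : hprod (a ++ b) = hprod a * hprod b.
Proof. by rewrite /hprod big_cat. Qed.

Lemma hprod_enum N (f : 'I_N -> nat) : hprod [seq f i | i <- enum 'I_N] = \prod_i h (f i).
Proof. by rewrite /hprod big_map big_enum. Qed.

Lemma hprod_perm a b : perm_eq a b -> hprod a = hprod b.
Proof. exact: perm_big. Qed.

Definition hmod (f : P) : Prop :=
  exists (k : nat) (r : 'I_k -> P) (idx : 'I_k -> 'I_(n./2) -> nat),
    (forall j, in_Rprime (r j)) /\ f = \sum_(j < k) r j * \prod_(l < n./2) h (idx j l).

Lemma hmod0 : hmod 0.
Proof. by exists 0%N, (fun _ => 0), (fun _ _ => 0%N); split => [[]//|]; rewrite big_ord0. Qed.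

Lemma hmodD f g : hmod f -> hmod g -> hmod (f + g).
Proof.
move=> [k1 [r1 [i1 [Hr1 ->]]]] [k2 [r2 [i2 [Hr2 ->]]]].
pose glue T (u : 'I_k1 -> T) (v : 'I_k2 -> T) j :=
  match fintype.split j with inl a => u a | inr b => v b end.
exists (k1 + k2)%N, (glue _ r1 r2), (glue _ i1 i2); split.
  by move=> j; rewrite /glue; case: fintype.split.
rewrite big_split_ord /glue; congr (_ + _); apply: eq_bigr => j _.
  by rewrite (unsplitK (inl j)).
by rewrite (unsplitK (inr j)).
Qed.

Lemma hmodMl a f : in_Rprime a -> hmod f -> hmod (a * f).
Proof.
move=> Ra [k [r [i [Hr ->]]]]; exists k, (fun j => a * r j), i; split.
  by move=> j; apply: in_RprimeM.
by rewrite mulr_sumr; apply: eq_bigr => j _; rewrite mulrA.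
Qed.

Lemma hmod_sign k f : hmod f -> hmod ((-1) ^+ k * f).
Proof. by rewrite -(rmorph_sign (@mpolyC n K)); apply: hmodMl; apply: in_RprimeC. Qed.

Lemma hmodN f : hmod f -> hmod (- f).
Proof. by rewrite -mulN1r; apply: (@hmod_sign 1). Qed.

Lemma hmodB f g : hmod f -> hmod g -> hmod (f - g).
Proof. by move=> Hf /hmodN; apply: hmodD. Qed.

Lemma hmodZ c f : hmod f -> hmod (c *: f).
Proof. by rewrite -mul_mpolyC; apply: hmodMl; apply: in_RprimeC. Qed.

Lemma hmod_sum (I : Type) (s : seq I) (Q : pred I) (F : I -> P) :
  (forall i, Q i -> hmod (F i)) -> hmod (\sum_(i <- s | Q i) F i).
Proof.
move=> HF; elim/big_rec: _ => [|i f Qi]; first exact: hmod0.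
by apply: hmodD; apply: HF.
Qed.

Lemma hmod_hprod_short a : (size a <= n./2)%N -> hmod (hprod a).
Proof.
move=> le_a; exists 1%N, (fun _ => 1), (fun _ l => nth 0%N a l); split.
  by move=> _; exists 1; rewrite comp_mpoly1.
rewrite big_ord1 mul1r /hprod (big_nth 0%N) big_mkord.
rewrite (big_ord_widen _ (fun i => h (nth 0%N a i)) le_a) [LHS]big_mkcond /=.
by apply: eq_bigr => i _; case: ltnP => // le'; rewrite nth_default // hsym0.
Qed.

End HsymModule.

Lemma det_last_col_comb (R : comNzRingType) N (A : 'M[R]_N.+1) (w : 'I_N.+1 -> R) :
  w ord_max = 1 -> \det A = \sum_i (\sum_j A i j * w j) * cofactor A i ord_max.
Proof.
move=> w1; have adjA j : \sum_i cofactor A i ord_max * A i j = (ord_max == j)%:R * \det A.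
  have := congr1 (fun M : 'M_N.+1 => M ord_max j) (mul_adj_mx A).
  by rewrite !mxE mulr_natl => <-; apply: eq_bigr => i _; rewrite mxE.
transitivity (\sum_j w j * \sum_i cofactor A i ord_max * A i j).
  rewrite (bigD1 ord_max) //= adjA eqxx mul1r w1 mul1r big1 ?addr0 // => j.
  by rewrite adjA eq_sym => /negbTE ->; rewrite mul0r mulr0.
under eq_bigr do rewrite mulr_sumr.
rewrite exchange_big /=; apply: eq_bigr => i _; rewrite mulr_suml.
by apply: eq_bigr => j _; rewrite mulrCA mulrC [w j * _]mulrC.
Qed.

Lemma perm_first_moved N (s : 'S_N) : s != 1%g ->
  exists2 i : 'I_N, (i < s i)%N & forall j : 'I_N, (j < i)%N -> s j = j.
Proof.
move=> s_neq1; have [i0 si0] : exists i0, s i0 != i0.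
  apply/existsP; apply: contraR s_neq1; rewrite negb_exists => /forallP fixs.
  by apply/eqP/permP => i; rewrite perm1; apply/eqP; rewrite -[_ == _]negbK fixs.
case: (@arg_minnP _ i0 (fun i => s i != i) (fun i : 'I_N => val i) si0) => i si min_i.
have fix_lt (j : 'I_N) : (j < i)%N -> s j = j.
  by move=> lt_ji; apply/eqP; apply: contraTT lt_ji => /min_i; rewrite -leqNgt.
exists i => //; rewrite ltn_neqAle eq_sym (inj_eq val_inj) si leqNgt /=.
apply/negP => lt_si; move: si.
by rewrite -(inj_eq (@perm_inj _ s)) fix_lt ?eqxx.
Qed.

(* Moving the exponents along a non-identity permutation s by 2 (s i - i)
   raises the first moved one, which already outweighs all later ones. *)
Lemma ltn_sum_expn_perm_shift N base (a b : 'I_N -> nat) (s : 'S_N) :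
  (N < base)%N -> (forall i j : 'I_N, (i <= j)%N -> (a j <= a i)%N) -> s != 1%g ->
  (forall i, (b i)%:Z = (a i)%:Z + 2 * ((s i : nat)%:Z - (i : nat)%:Z)) ->
  (\sum_i base ^ a i < \sum_i base ^ b i)%N.
Proof.
move=> N_lt_base a_decr /perm_first_moved[i1 s_i1 fix_lt] Eb.
have base_gt0 : (0 < base)%N by case: base N_lt_base.
pose before (i : 'I_N) := (i < i1)%N.
rewrite (bigID before) [X in (_ < X)%N](bigID before) /=.
have -> : (\sum_(i | before i) base ^ b i = \sum_(i | before i) base ^ a i)%N.
  apply: eq_bigr => i lt_i; congr (_ ^ _)%N; apply/eqP; rewrite -eqz_nat Eb fix_lt //.
  by rewrite subrr mulr0 addr0.
rewrite ltn_add2l [X in (_ < X)%N](bigD1 i1) /=; last by rewrite /before ltnn.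
have b_i1 : (a i1 < b i1)%N by have := Eb i1; lia.
apply: (@leq_trans (base ^ b i1)%N); last exact: leq_addr.
apply: (@leq_ltn_trans (N * base ^ a i1)%N); last first.
  by rewrite (leq_trans _ (leq_pexp2l base_gt0 b_i1)) // expnS ltn_pmul2r ?expn_gt0 ?base_gt0.
apply: (@leq_trans (\sum_(i | ~~ before i) base ^ a i1)%N).
  by apply: leq_sum => i; rewrite /before -leqNgt => le_i1; rewrite leq_pexp2l // a_decr.
by rewrite sum_nat_const leq_mul2r (leq_trans (max_card _)) ?card_ord ?orbT.
Qed.

Section Block.
Variables (K : comNzRingType) (n : nat).
Local Notation m := n./2.
Local Notation e := (mesym n K).
Local Notation hsymz := (@hsymz K n).
Local Notation hprod := (@hprod K n).
Local Notation hmod := (@hmod K n).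

(* The base exceeds the block size n./2 + 1, as ltn_sum_expn_perm_shift requires. *)
Definition hweight (a : seq nat) : nat := (\sum_(x <- a) m.+2 ^ x)%N.

Lemma hweight_cat a b : hweight (a ++ b) = (hweight a + hweight b)%N.
Proof. exact: big_cat. Qed.

Lemma hweight_enum N (f : 'I_N -> nat) :
  hweight [seq f k | k <- enum 'I_N] = (\sum_k m.+2 ^ f k)%N.
Proof. by rewrite /hweight big_map big_enum. Qed.

Lemma sumn_enum N (f : 'I_N -> nat) : sumn [seq f k | k <- enum 'I_N] = (\sum_k f k)%N.
Proof. by rewrite sumnE big_map big_enum. Qed.

Lemma Posz_sum (I : Type) (r : seq I) (F : I -> nat) :
  (\sum_(i <- r) F i)%N%:Z = \sum_(i <- r) (F i)%:Z.
Proof. exact: (big_morph _ PoszD). Qed.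

Lemma prod_hsymz N (c : 'I_N -> int) : (forall k, 0 <= c k) ->
  \prod_k hsymz (c k) = hprod [seq `|c k|%N | k <- enum 'I_N].
Proof.
move=> c_ge0; rewrite hprod_enum; apply: eq_bigr => k _.
by have := c_ge0 k; case: (c k).
Qed.

Lemma prod_hsymz_eq0 N (c : 'I_N -> int) k : c k < 0 -> \prod_k hsymz (c k) = 0.
Proof. by move=> ck; rewrite (bigD1 k) //= hsymz_lt0 // mul0r. Qed.

Lemma sumn_absz_enum N (c : 'I_N -> int) : (forall k, 0 <= c k) ->
  (sumn [seq `|c k|%N | k <- enum 'I_N])%:Z = \sum_k c k.
Proof.
by move=> c_ge0; rewrite sumn_enum Posz_sum; apply: eq_bigr => k _; rewrite gez0_abs.
Qed.

Variables (a : 'I_m.+1 -> nat) (rest : seq nat).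
Hypothesis a_gt0 : forall i, (0 < a i)%N.
Hypothesis a_decr : forall i j : 'I_m.+1, (i <= j)%N -> (a j <= a i)%N.
Let blk := [seq a i | i <- enum 'I_m.+1] ++ rest.
Hypothesis hmod_deg_lt : forall b, (sumn b < sumn blk)%N -> hmod (hprod b).
Hypothesis hmod_weight_gt : forall b, sumn b = sumn blk -> size b = size blk ->
  (hweight blk < hweight b)%N -> hmod (hprod b).

Lemma sumn_blk : (sumn blk)%:Z = \sum_i (a i)%:Z + (sumn rest)%:Z.
Proof. by rewrite sumn_cat sumn_enum PoszD Posz_sum. Qed.

Lemma hmod_prod_hsymz_deg_lt (c : 'I_m.+1 -> int) :
  \sum_k c k < \sum_k (a k)%:Z -> hmod (\prod_k hsymz (c k) * hprod rest).
Proof.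
have [c_ge0 lt_c|] := boolP [forall k, 0 <= c k]; last first.
  by case/forallPn=> k; rewrite -ltNge => ck _; rewrite (prod_hsymz_eq0 ck) mul0r; apply: hmod0.
move/forallP in c_ge0; rewrite prod_hsymz // -hprod_cat; apply: hmod_deg_lt.
by rewrite -ltz_nat sumn_cat PoszD sumn_absz_enum // sumn_blk ltrD2r.
Qed.

Lemma hmod_prod_hsymz_weight_gt (c : 'I_m.+1 -> int) : \sum_k c k = \sum_k (a k)%:Z ->
  ((forall k, 0 <= c k) -> (\sum_k m.+2 ^ a k < \sum_k m.+2 ^ `|c k|)%N) ->
  hmod (\prod_k hsymz (c k) * hprod rest).
Proof.
have [c_ge0 sum_c lt_w|] := boolP [forall k, 0 <= c k]; last first.
  by case/forallPn=> k; rewrite -ltNge => ck _ _; rewrite (prod_hsymz_eq0 ck) mul0r; apply: hmod0.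
move/forallP in c_ge0; rewrite prod_hsymz // -hprod_cat; apply: hmod_weight_gt.
- by apply/eqP; rewrite -eqz_nat sumn_cat PoszD sumn_absz_enum // sumn_blk sum_c.
- by rewrite !size_cat !size_map.
- by rewrite !hweight_cat !hweight_enum ltn_add2r lt_w.
Qed.

Definition hshift (i j : 'I_m.+1) : int := (a i)%:Z + 2 * ((j : nat)%:Z - (i : nat)%:Z).

Definition hmx : 'M[{mpoly K[n]}]_m.+1 := \matrix_(i, j) hsymz (hshift i j).

Lemma sum_hshift_perm (s : 'S_m.+1) : \sum_i hshift i (s i) = \sum_i (a i)%:Z.
Proof.
rewrite big_split /= -mulr_sumr big_split /= sumrN.
by rewrite [X in _ - X](reindex_inj (@perm_inj _ s)) subrr mulr0 addr0.
Qed.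

Lemma hmx_row_comb i : \sum_j hmx i j * e (2 * (m - j)) =
  \sum_(q < uphalf n) e (2 * q).+1 * hsymz ((a i + 2 * (m - i))%N%:Z - ((2 * q).+1)%:Z).
Proof.
rewrite -esym_hsym_parity; last by rewrite addn_gt0 a_gt0.
rewrite (reindex_inj rev_ord_inj) /=; apply: eq_bigr => j _.
rewrite mxE mulrC; have := ltn_ord i; have := ltn_ord j => lt_j lt_i.
congr (e _ * hsymz _); first by congr (2 * _)%N; lia.
by rewrite /hshift /=; lia.
Qed.

Lemma hmod_det_hmx : hmod (\det hmx * hprod rest).
Proof.
have w_max : e (2 * (m - @ord_max m)) = 1 by rewrite subnn muln0 mesym0E.
rewrite (@det_last_col_comb _ _ hmx (fun j => e (2 * (m - j))) w_max) mulr_suml.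
apply: hmod_sum => i _.
rewrite expand_cofactor hmx_row_comb !mulr_suml; apply: hmod_sum => q _.
rewrite -!mulrA; apply: hmodMl; first exact: in_Rprime_mesym_odd.
set c0 := (_ - _)%R; rewrite !(mulr_suml, mulr_sumr).
apply: hmod_sum => s /eqP s_i; rewrite mulrCA -!mulrA; apply: hmod_sign.
pose c k := if k == i then c0 else hshift k (s k).
have -> : \prod_(k | i != k) hmx k (s k) * (hsymz c0 * hprod rest) =
    \prod_k hsymz (c k) * hprod rest.
  rewrite mulrCA mulrA [in RHS](bigD1 i) //= /c eqxx; congr (_ * _ * _).
  by apply: eq_big => [k|k ki]; [rewrite eq_sym | rewrite mxE eq_sym (negbTE ki)].
apply: hmod_prod_hsymz_deg_lt; rewrite -(sum_hshift_perm s) (bigD1 i) //=.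
have -> : \sum_(k | k != i) c k = \sum_(k | k != i) hshift k (s k).
  by apply: eq_bigr => k /negbTE ki; rewrite /c ki.
rewrite [X in _ < X](bigD1 i) //= ltrD2r /c eqxx /c0 /hshift s_i /=.
have := ltn_ord i; lia.
Qed.

Lemma hprod_blk_diag :
  hprod blk = (\det hmx - \sum_(s : 'S_m.+1 | s != 1%g) (-1) ^+ s * \prod_i hmx i (s i)) * hprod rest.
Proof.
rewrite hprod_cat /determinant (bigD1 1%g) //= odd_perm1 expr0 mul1r addrK.
rewrite hprod_enum; congr (_ * _); apply: eq_bigr => i _.
by rewrite perm1 mxE /hshift subrr mulr0 addr0.
Qed.

Lemma hmod_offdiag :
  hmod ((\sum_(s : 'S_m.+1 | s != 1%g) (-1) ^+ s * \prod_i hmx i (s i)) * hprod rest).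
Proof.
rewrite mulr_suml; apply: hmod_sum => s s_neq1; rewrite -mulrA; apply: hmod_sign.
rewrite (eq_bigr (fun i => hsymz (hshift i (s i)))) => [|i _]; last by rewrite mxE.
apply: hmod_prod_hsymz_weight_gt; first exact: sum_hshift_perm.
move=> c_ge0; apply: (ltn_sum_expn_perm_shift (s := s)) => // i.
by rewrite gez0_abs.
Qed.

Lemma hmod_hprod_blk : hmod (hprod blk).
Proof. by rewrite hprod_blk_diag mulrBl; apply: hmodB; [apply: hmod_det_hmx | apply: hmod_offdiag]. Qed.

End Block.

Section AllProducts.
Variables (K : comNzRingType) (n : nat).
Local Notation m := n./2.
Local Notation hprod := (@hprod K n).
Local Notation hmod := (@hmod K n).
Local Notation hweight := (@hweight n).

Lemma hweight_le a : (hweight a <= size a * m.+2 ^ sumn a)%N.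
Proof.
elim: a => [|x a IH]; first by rewrite /hweight big_nil.
rewrite /hweight big_cons -/(hweight a) /= mulSn.
apply: leq_add; first by rewrite leq_pexp2l // leq_addr.
by apply: leq_trans IH _; rewrite leq_mul2l leq_pexp2l ?leq_addl ?orbT.
Qed.

Lemma hmod_hprod_sorted s : (m < size s)%N -> 0%N \notin s -> sorted geq s ->
  (forall b, (sumn b < sumn s)%N -> hmod (hprod b)) ->
  (forall b, sumn b = sumn s -> size b = size s -> (hweight s < hweight b)%N -> hmod (hprod b)) ->
  hmod (hprod s).
Proof.
move=> m_lt_s s_neq0 s_sorted hmod_deg_lt hmod_weight_gt.
have Es : s = [seq nth 0%N s i | i : 'I_m.+1 <- enum 'I_m.+1] ++ drop m.+1 s.
  rewrite -[X in X = _](cat_take_drop m.+1); congr (_ ++ _).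
  by rewrite -(map_nth_iota0 0%N m_lt_s) -val_enum_ord -map_comp.
rewrite Es; apply: hmod_hprod_blk; rewrite -?Es //.
  move=> i; rewrite lt0n; apply: contraNneq s_neq0 => <-.
  by rewrite mem_nth // (leq_trans (ltn_ord i)).
move=> i j le_ij; apply: (sorted_leq_nth (rev_trans leq_trans) leqnn 0%N s_sorted) => //.
  by rewrite inE (leq_trans (ltn_ord i)).
by rewrite inE (leq_trans (ltn_ord j)).
Qed.

(* Lexicographic induction on the total degree, the number of factors, and
   the distance of the weight to its a priori bound. *)
Lemma hmod_hprod a : hmod (hprod a).
Proof.
move: {2}(sumn a) (erefl (sumn a)) => d; elim/ltn_ind: d a => d IHd.
move=> a; move: {2}(size a) (erefl (size a)) => L; elim/ltn_ind: L a => L IHL.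
move=> a; move: {2}(L * m.+2 ^ d - hweight a)%N (erefl (L * m.+2 ^ d - hweight a)%N).
move=> F; elim/ltn_ind: F a => F IHF a EF EL Ed.
have [L_le_m|m_lt_L] := leqP L m; first by apply: hmod_hprod_short; rewrite EL.
have [a0|a_neq0] := boolP (0%N \in a).
  have pa := perm_to_rem a0.
  rewrite (hprod_perm _ _ pa) /hprod big_cons hsym0 mul1r.
  have L_gt0 : (0 < L)%N by case: L m_lt_L {IHL IHF EF EL}.
  apply: (IHL L.-1 _ (rem 0%N a)); first by rewrite prednK.
    by rewrite size_rem // EL.
  by rewrite -Ed (perm_sumn pa).
have ps : perm_eq (sort geq a) a by rewrite perm_sort.
rewrite -(hprod_perm _ _ ps); apply: hmod_hprod_sorted.
- by rewrite (perm_size ps) EL.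
- by rewrite (perm_mem ps).
- by apply: sort_sorted => x y; apply: leq_total.
- by move=> b; rewrite (perm_sumn ps) Ed => /IHd; apply.
have -> : hweight (sort geq a) = hweight a by apply: perm_big.
move=> b; rewrite (perm_sumn ps) (perm_size ps) Ed EL => Eb Lb lt_w.
apply: (IHF _ _ b erefl Lb Eb); rewrite -EF.
by have := hweight_le b; rewrite Lb Eb; lia.
Qed.

End AllProducts.

Section SymmetricPolynomials.
Variables (K : comNzRingType) (n : nat).
Local Notation P := {mpoly K[n]}.
Local Notation h := (hsym K n).
Local Notation e := (mesym n K).
Local Notation hprod := (@hprod K n).
Local Notation hmod := (@hmod K n).

Lemma hmodM_hprod f b : hmod f -> hmod (f * hprod b).
Proof.
move=> [k [r [idx [Hr ->]]]]; rewrite mulr_suml; apply: hmod_sum => j _.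
rewrite -mulrA; apply: hmodMl => //.
by rewrite -hprod_enum -hprod_cat; apply: hmod_hprod.
Qed.

Lemma hmodM f g : hmod f -> hmod g -> hmod (f * g).
Proof.
move=> Hf [k [r [idx [Hr ->]]]]; rewrite mulr_sumr; apply: hmod_sum => j _.
rewrite mulrCA; apply: hmodMl => //.
by rewrite -hprod_enum; apply: hmodM_hprod.
Qed.

Lemma hmod1 : hmod 1.
Proof. by have := hmod_hprod K n [::]; rewrite /hprod big_nil. Qed.

Lemma hmod_prod (I : Type) (s : seq I) (F : I -> P) :
  (forall i, hmod (F i)) -> hmod (\prod_(i <- s) F i).
Proof. by move=> HF; elim/big_rec: _ => [|i f _]; [apply: hmod1 | apply: hmodM]. Qed.

Lemma hmodX f k : hmod f -> hmod (f ^+ k).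
Proof. by move=> Hf; rewrite -(subn0 k) -prodr_const_nat; apply: hmod_prod. Qed.

Lemma hmod_hsym k : hmod (h k).
Proof. by have := hmod_hprod K n [:: k]; rewrite /hprod big_seq1. Qed.

Lemma hmod_mesym k : hmod (e k).
Proof.
elim/ltn_ind: k => [[_|k IHk]]; first by rewrite mesym0E; apply: hmod1.
have := newton_esym_hsym K n (ltn0Sn k).
rewrite big_ord_recr /= subnn hsym0 mulr1 => /eqP; rewrite addrC addr_eq0 => /eqP newton.
have -> : e k.+1 = (-1) ^+ k.+1 *: ((-1) ^+ k.+1 *: e k.+1).
  by rewrite scalerA -exprMn mulrNN mulr1 expr1n scale1r.
rewrite newton; apply/hmodZ/hmodN/hmod_sum => i _.
exact/hmodZ/hmodM/hmod_hsym/IHk.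
Qed.

Lemma hmod_sym f : f \is symmetric -> hmod f.
Proof.
case/sym_fundamental=> t [<- _]; rewrite comp_mpolyEX; apply: hmod_sum => mu _.
apply: hmodZ; rewrite comp_mpolyX; apply: hmod_prod => i.
by rewrite tnth_mktuple; apply/hmodX/hmod_mesym.
Qed.

End SymmetricPolynomials.

Theorem mainTheorem6 (R : realType) (n : nat) (hn : (1 <= n)%N)
    (f : {mpoly (CC R)[n]}) (hf : f \is symmetric) :
  exists (k : nat) (r : 'I_k -> {mpoly (CC R)[n]}) (idx : 'I_k -> 'I_(n./2) -> nat),
    (forall j, in_Rprime (r j)) /\
    f = \sum_(j < k) r j * \prod_(l < n./2) hsym (CC R) n (idx j l).
Proof. exact: hmod_sym hf. Qed.
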